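(* Let $P=(T;U,V)$ be a 3M-DAP with $r_v := s_u u - (t-2)s_t - (v-2)s_v > 0$ and such that $b^* := 2s_v/r_v$ is an integer. Then $f(P) = x_u/u$, and there exists an optimal feasible solution in which every entry of $V$ is strictly greater than $x_u/u$.
   Context: A three-matrix division and assignment problem (3M-DAP) $P=(T;U,V)$ is specified by integers $t,u,v$ (numbers of columns), integers $s_t, s_u, s_v$ (numbers of rows) and rationals $x_t, x_u, x_v$ (required row sums), subject to: $t \ge 2$, $u \ge 2$, $v \ge 1$; if $v = 1$ then $v s_v \le (t-2)s_t$; $s_t > 0$, $s_u > 0$, $s_v \ge 0$; $s_u u + s_v v = s_t t$; $s_u x_u + s_v x_v = s_t x_t$; and $x_u/u < x_v/v$. A feasible solution assigns real values to the entries of an $s_t\times t$ matrix $T$, an $s_u \times u$ matrix $U$ and an $s_v \times v$ matrix $V$ so that every row of $T$, $U$, $V$ sums to $x_t$, $x_u$, $x_v$ respectively, and the multiset of entries of $T$ equals the multiset union of the entries of $U$ and $V$. $f(P)$ is the maximum, over feasible solutions, of the smallest entry of $T$; a feasible solution attaining it is optimal. *)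

From HB Require Import structures.
From mathcomp Require Import all_boot all_order all_algebra.
From mathcomp Require Import reals.
Set Implicit Arguments. Unset Strict Implicit. Unset Printing Implicit Defensive.
Import Order.TTheory GRing.Theory Num.Theory.
Local Open Scope ring_scope.

Record dap := DAP {
  dt : nat; du : nat; dv : nat;        (* numbers of columns t, u, v *)
  st : nat; su : nat; sv : nat;        (* numbers of rows s_t, s_u, s_v *)
  xt : rat; xu : rat; xv : rat         (* required row sums *)
}.

Definition valid_dap (P : dap) : Prop :=
  [/\ (2 <= dt P)%N, (2 <= du P)%N, (1 <= dv P)%N &
      (dv P = 1%N -> (dv P * sv P <= (dt P - 2) * st P)%N)] /\
  [/\ (0 < st P)%N, (0 < su P)%N,
      (su P * du P + sv P * dv P = st P * dt P)%N,
      (su P)%:R * xu P + (sv P)%:R * xv P = (st P)%:R * xt P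
    & xu P / (du P)%:R < xv P / (dv P)%:R].

Definition entries (R : Type) m n (A : 'M[R]_(m, n)) : seq R :=
  [seq A i j | i <- enum 'I_m, j <- enum 'I_n].

Definition min_entry (R : realDomainType) m n (A : 'M[R]_(m, n)) : R :=
  \big[Num.min/head 0 (entries A)]_(x <- entries A) x.

Definition feasible (R : realType) (P : dap)
  (T : 'M[R]_(st P, dt P)) (U : 'M[R]_(su P, du P)) (V : 'M[R]_(sv P, dv P)) : Prop :=
  [/\ forall i, \sum_j T i j = ratr (xt P),
      forall i, \sum_j U i j = ratr (xu P),
      forall i, \sum_j V i j = ratr (xv P)
    & perm_eq (entries T) (entries U ++ entries V)].

Definition is_fP (R : realType) (P : dap) (c : R) : Prop :=
  (exists T U V, @feasible R P T U V /\ min_entry T = c) /\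
  (forall T U V, @feasible R P T U V -> min_entry T <= c).

Definition r_v (P : dap) : int :=
  (su P * du P)%:Z - ((dt P)%:Z - 2) * (st P)%:Z - ((dv P)%:Z - 2) * (sv P)%:Z.

From HB Require Import structures.
From mathcomp Require Import all_boot all_order all_algebra.
From mathcomp Require Import reals.
From mathcomp Require Import zify ring.
Set Implicit Arguments. Unset Strict Implicit. Unset Printing Implicit Defensive.
Import Order.TTheory GRing.Theory Num.Theory.

(* Write a = x_u/u. Every row of U has an entry at most its mean a, and that
   entry occurs in T, so f(P) <= a.  Conversely, m := s_t - (v-1) s_v satisfies
   r_v = 2 m, so b := b* = s_v / m is a natural number with s_v = m b and
   s_t = m ((v-1) b + 1).  Fill U with a, give the cell p of V the value
   a + kappa w(p) for positive integer weights w with row sums N = (v-1) b + 1,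
   where kappa = (x_v - v a) / N > 0, and place the cells of V injectively into
   T so that the weights in every row of T add up to b, the free cells of T
   holding a.  Then all row sums are right, min T = a and V > a.  The placement
   consists of m copies of a block with (v-1) b + 1 rows of T and b rows of V.
   For v >= 2, row j of V is cut into a head of weight b - j, a tail of weight
   j + 1 and v - 2 full pieces of weight b, the tail of row j - 1 sharing a row
   of T with the head of row j.  For v = 1, the hypothesis v s_v <= (t-2) s_t
   gives b <= t, and one row of T takes b whole rows of V. *)

Definition grid (m n : nat) : seq (nat * nat) :=
  [seq (i, j) | i <- iota 0 m, j <- iota 0 n].

Lemma mem_grid m n p : (p \in grid m n) = (p.1 < m) && (p.2 < n).
Proof.
case: p => i j; apply/allpairsP/andP => [[[i' j'] /= [hi hj [-> ->]]]|[hi hj]].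
  by move: hi hj; rewrite !mem_iota !add0n => /andP[_ ->] /andP[_ ->].
by exists (i, j); rewrite !mem_iota !add0n hi hj.
Qed.

Lemma grid_uniq m n : uniq (grid m n).
Proof.
by apply: allpairs_uniq; rewrite ?iota_uniq // => -[? ?] [? ?] _ _ [-> ->].
Qed.

Lemma size_grid m n : size (grid m n) = m * n.
Proof. by rewrite size_allpairs !size_iota. Qed.

Lemma entries_mx (R : Type) m n (F : nat * nat -> R) :
  entries (\matrix_(i < m, j < n) F (i : nat, j : nat)) = map F (grid m n).
Proof.
rewrite /entries /grid -(val_enum_ord m) -(val_enum_ord n).
rewrite map_allpairs allpairs_mapl allpairs_mapr.
by apply: eq_allpairs => i j; rewrite mxE.
Qed.

Definition placement (st dt sv dv : nat) (occ : nat * nat -> option (nat * nat))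
    (site : nat * nat -> nat * nat) : Prop :=
  {in grid sv dv, forall p, site p \in grid st dt /\ occ (site p) = Some p} /\
  {in grid st dt, forall x p, occ x = Some p -> p \in grid sv dv /\ site p = x}.

Lemma perm_placement st dt sv dv occ site :
  placement st dt sv dv occ site -> forall (T : eqType) (f : nat * nat -> T) d,
  perm_eq [seq oapp f d (occ x) | x <- grid st dt]
          (nseq (st * dt - sv * dv) d ++ map f (grid sv dv)).
Proof.
move=> [siteP occP] T f d; pose S := [pred x | occ x != None].
have occupied : perm_eq (filter S (grid st dt)) (map site (grid sv dv)).
  apply: uniq_perm; first by rewrite filter_uniq ?grid_uniq.
    rewrite map_inj_in_uniq ?grid_uniq // => p q /siteP[_ hp] /siteP[_ hq] e.
    by move: hp; rewrite e hq => -[].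
  move=> x; rewrite mem_filter; apply/andP/mapP => [[]|[p pg ->]].
    by rewrite /S /=; case E: (occ x) => [p|] // _ xg; have [? <-] := occP x xg p E; exists p.
  by have [? hp] := siteP p pg; rewrite /S /= hp.
have free : [seq oapp f d (occ x) | x <- filter (predC S) (grid st dt)]
            = nseq (st * dt - sv * dv) d.
  have -> : st * dt - sv * dv = size (filter (predC S) (grid st dt)).
    by rewrite -(size_grid st dt) -(count_predC S) !size_filter -size_filter
      (perm_size occupied) size_map size_grid addKn.
  rewrite -(size_map (fun x => oapp f d (occ x))); apply/all_pred1P/allP => _ /mapP[x + ->].
  by rewrite mem_filter /S /= negbK => /andP[/eqP-> _].
rewrite -(permPl (perm_map _ (permEl (perm_filterC S (grid st dt))))).
rewrite map_cat free perm_catC perm_cat2l.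
rewrite (permPl (perm_map _ occupied)) -map_comp.
suff /eq_in_map-> : {in grid sv dv, (fun x => oapp f d (occ x)) \o site =1 f} by [].
by move=> p /siteP[_ hp] /=; rewrite hp.
Qed.

(* The cell [x] of T holds the cell [occ x] of V, if any; [site] is the inverse
   placement and [w] weighs the cells of V. *)
Definition layout st dt sv dv (b N : nat) occ site (w : nat * nat -> nat) : Prop :=
  [/\ placement st dt sv dv occ site,
      {in grid sv dv, forall p, 0 < w p},
      forall j, j < sv -> \sum_(r < dv) w (j, r : nat) = N &
      forall i, i < st -> \sum_(c < dt) oapp w 0 (occ (i, c : nat)) = b].

Definition shift_row k (x : nat * nat) := (k + x.1, x.2).

Definition repeat_occ s r (occ : nat * nat -> option (nat * nat)) (x : nat * nat) :=
  omap (shift_row (x.1 %/ s * r)) (occ (x.1 %% s, x.2)).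

Definition repeat_site s r (site : nat * nat -> nat * nat) (p : nat * nat) :=
  shift_row (p.1 %/ r * s) (site (p.1 %% r, p.2)).

Definition repeat_weight r (w : nat * nat -> nat) (p : nat * nat) := w (p.1 %% r, p.2).

Lemma divmodnMDl d q x : x < d -> (q * d + x) %/ d = q /\ (q * d + x) %% d = x.
Proof.
by move=> xd; rewrite modnMDl modn_small // divnMDl ?divn_small ?addn0 //; apply: leq_ltn_trans xd.
Qed.

Lemma ltn_divmod k m n : k < m * n -> k %/ n < m /\ k %% n < n.
Proof.
move=> kmn; have /andP[_ n_gt0] : (0 < m) && (0 < n) by rewrite -muln_gt0 (leq_ltn_trans _ kmn).
by split; [rewrite ltn_divLR // mulnC | exact: ltn_pmod].
Qed.

Lemma layout_repeat m s t r v b N occ site w :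
  layout s t r v b N occ site w ->
  layout (m * s) t (m * r) v b N (repeat_occ s r occ) (repeat_site s r site) (repeat_weight r w).
Proof.
case=> -[siteP occP] w_gt0 rowV rowT; split; first split.
- move=> [j c]; rewrite mem_grid /= => /andP[/ltn_divmod[jm jr] hc].
  have /siteP : (j %% r, c) \in grid r v by rewrite mem_grid /= jr.
  rewrite /repeat_site /repeat_occ /shift_row mem_grid /=.
  case: (site _) => i c' /= [/andP[hi hc'] hocc]; have [-> ->] := divmodnMDl (j %/ r) hi.
  by rewrite hocc /= -divn_eq mem_grid /= hc' andbT; split => //; nia.
- move=> [i c]; rewrite mem_grid /= => /andP[/ltn_divmod[im ims] hc] p.
  rewrite /repeat_occ /=; case E: (occ _) => [[j c']|] //= [<-].
  have /occP/(_ _ E) : (i %% s, c) \in grid s t by rewrite mem_grid /= ims.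
  rewrite mem_grid /= => -[/andP[hj hc'] hsite].
  rewrite /repeat_site /shift_row mem_grid /=; have [-> ->] := divmodnMDl (i %/ s) hj.
  by rewrite hsite /= -divn_eq hc' andbT; split => //; nia.
- move=> [j c]; rewrite mem_grid /= => /andP[/ltn_divmod[_ jr] hc].
  by apply: w_gt0; rewrite mem_grid /= jr.
- by move=> j /ltn_divmod[_ jr]; exact: rowV jr.
- move=> i /ltn_divmod[_ ims]; rewrite -(rowT _ ims); apply: eq_bigr => c _.
  rewrite /repeat_occ /=; case E: (occ _) => [[j c']|] //=.
  have /occP/(_ _ E) : (i %% s, c : nat) \in grid s t by rewrite mem_grid /= ims ltn_ord.
  rewrite mem_grid /= => -[/andP[hj _] _].
  by rewrite /repeat_weight /shift_row /=; have [_ ->] := divmodnMDl (i %/ s) hj.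
Qed.

Lemma layout_empty s t v N : layout s t 0 v 0 N (fun=> None) id (fun=> 0).
Proof.
split; first split.
- by move=> p; rewrite mem_grid.
- by [].
- by move=> p; rewrite mem_grid.
- by [].
- by move=> i _; rewrite big1.
Qed.

Definition row_occ b (x : nat * nat) := if x.2 < b then Some (x.2, 0) else None.

Lemma layout_row t b : b <= t -> layout 1 t b 1 b 1 (row_occ b) (fun p => (0, p.1)) (fun=> 1).
Proof.
move=> bt; split; first split.
- move=> [j c]; rewrite !mem_grid /= ltnS leqn0 => /andP[jb /eqP->].
  by rewrite /row_occ /= jb (leq_trans jb bt).
- move=> [i c]; rewrite mem_grid /= ltnS leqn0 => /andP[/eqP-> _] p.
  by rewrite /row_occ /=; case: ifP => // cb [<-]; rewrite mem_grid /= cb.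
- by [].
- by move=> j _; rewrite big_ord1.
move=> i _; rewrite (eq_bigr (fun c : 'I_t => if c < b then 1 else 0)) => [|c _].
  by rewrite -big_mkcond -(big_ord_widen _ (fun=> 1) bt) sum_nat_const card_ord muln1.
by rewrite /row_occ /=; case: ifP.
Qed.

(* Row i <= b of T holds the tail of row i-1 of V in column 0 and the head of
   row i in column 1; row b+1 + s*b + j holds the s-th full piece of row j.
   In V, column 0 is the head, column 1 the tail. *)
Definition junction_occ b (x : nat * nat) : option (nat * nat) :=
  let: (i, c) := x in
  if i <= b then
    match c with
    | 0 => if i is i'.+1 then Some (i', 1) else None
    | 1 => if i < b then Some (i, 0) else None
    | _ => None
    end
  else if c == 0 then Some ((i - b.+1) %% b, ((i - b.+1) %/ b).+2) else None.

Definition junction_site b (p : nat * nat) : nat * nat :=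
  let: (j, r) := p in
  match r with
  | 0 => (j, 1)
  | 1 => (j.+1, 0)
  | s.+2 => (b.+1 + (s * b + j), 0)
  end.

Definition junction_weight b (p : nat * nat) : nat :=
  let: (j, r) := p in
  match r with
  | 0 => b - j
  | 1 => j.+1
  | _ => b
  end.

Lemma layout_junction t w b : 0 < b -> 1 < t ->
  layout (w.+1 * b).+1 t b w.+2 b (w.+1 * b).+1
         (junction_occ b) (junction_site b) (junction_weight b).
Proof.
move=> b_gt0 t_gt1; split; first split.
- move=> [j [|[|s]]]; rewrite !mem_grid /= => /andP[jb sw].
  + by rewrite t_gt1 (ltnW jb) jb andbT; split => //; nia.
  + by rewrite jb (ltnW t_gt1) andbT; split => //; nia.
  + rewrite (ltnW t_gt1) andbT [X in if X then _ else _]leqNgt leq_addr /= addKn.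
    by have [-> ->] := divmodnMDl s jb; split => //; nia.
- move=> [i c]; rewrite mem_grid /= => /andP[ib _] [j r] /=.
  case: (leqP i b) => [ib'|bi].
  + case: c => [|[|//]].
    * by case: i ib ib' => // i ib ib' [<- <-]; rewrite mem_grid /= ib'.
    * by case: ifP => // ib'' [<- <-]; rewrite mem_grid /= ib''.
  + case: c => // -[<- <-]; rewrite mem_grid /= ltn_pmod //= !ltnS ltn_divLR //.
    by rewrite -divn_eq subnKC //; split => //; nia.
- by move=> [j [|[|s]]]; rewrite mem_grid /= => /andP[jb _] //; rewrite subn_gt0.
- move=> j jb; rewrite !big_ord_recl /= (eq_bigr (fun=> b)) // sum_nat_const card_ord.
  by rewrite mulSn; lia.
- move=> i ib; case: t t_gt1 => [|[|t]] // _.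
  rewrite !big_ord_recl big1 /= => [|c _]; last by case: ifP.
  case: (leqP i b) => [ib'|bi]; last by rewrite /= !addn0.
  by case: i ib ib' => [|i] ib ib' /=; [rewrite b_gt0 /= subn0 | case: ltnP => /=]; lia.
Qed.

Lemma layout_block t v b : 1 < t -> 0 < v -> (v = 1 -> b <= t) ->
  exists occ site w, layout (v.-1 * b).+1 t b v b (v.-1 * b).+1 occ site w.
Proof.
move=> t_gt1 v_gt0 bt; have [->|b_gt0] := posnP b.
  by do 3 eexists; apply: layout_empty.
case: v v_gt0 bt => [|[|w]] // _ bt; do 3 eexists.
- exact: layout_row (bt erefl).
- exact: layout_junction.
Qed.

Local Open Scope ring_scope.

Section MinEntry.
Variables (R : realDomainType) (m n : nat) (A : 'M[R]_(m, n)).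

Lemma mem_entries i j : A i j \in entries A.
Proof. by apply/allpairsP; exists (i, j); rewrite !mem_enum. Qed.

Lemma min_entry_le x : x \in entries A -> min_entry A <= x.
Proof. by move=> Ax; apply: ge_bigmin_seq. Qed.

Lemma le_min_entry c :
  (0 < m)%N -> (0 < n)%N -> (forall i j, c <= A i j) -> c <= min_entry A.
Proof.
move=> m0 n0 cA; have Ac x : x \in entries A -> c <= x.
  by case/allpairsP=> -[i j] [_ _ ->]; apply: cA.
have [x Ax] : exists x, x \in entries A by exists (A (Ordinal m0) (Ordinal n0)); apply: mem_entries.
rewrite /min_entry big_seq_cond; apply: le_bigmin => [|y /andP[/Ac //]].
by apply: Ac; case: (entries A) Ax => //= y s _; rewrite mem_head.
Qed.
End MinEntry.

Lemma exists_le_mean (R : realFieldType) n (F : 'I_n -> R) :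
  (0 < n)%N -> exists j, F j <= (\sum_j F j) / n%:R.
Proof.
move=> n0; apply/existsP/contraT; rewrite negb_exists => /forallP hF.
have : \sum_(j < n) (\sum_j F j) / n%:R < \sum_j F j.
  apply: ltr_sum => [|j _]; last by rewrite ltNge hF.
  by apply/hasP; exists (Ordinal n0); rewrite ?mem_index_enum.
by rewrite sumr_const card_ord -[X in X < _]mulr_natr divfK ?pnatr_eq0 -?lt0n // ltxx.
Qed.

Lemma feasible_min_entry_le (R : realType) P T U V :
  valid_dap P -> @feasible R P T U V -> min_entry T <= ratr (xu P) / (du P)%:R.
Proof.
case=> [[_ hu _ _] [_ hsu _ _ _]] [_ hU _ hTUV].
have [j Uj] := @exists_le_mean _ _ (U (Ordinal hsu)) (ltnW hu).
rewrite hU in Uj; apply: le_trans Uj; apply: min_entry_le.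
by rewrite (perm_mem hTUV) mem_cat mem_entries.
Qed.

Lemma sum_affine (R : pzRingType) n (a k : R) (g : 'I_n -> nat) :
  \sum_(c < n) (a + k * (g c)%:R) = n%:R * a + k * (\sum_c g c)%:R.
Proof. by rewrite big_split sumr_const card_ord mulr_natl -mulr_sumr natr_sum. Qed.

Section LayoutSolution.
Variables (R : realType) (P : dap) (b N : nat).
Variables (occ : nat * nat -> option (nat * nat)) (site : nat * nat -> nat * nat).
Variable w : nat * nat -> nat.
Hypotheses (hP : valid_dap P) (hL : layout (st P) (dt P) (sv P) (dv P) b N occ site w).
Hypotheses (N_gt0 : (0 < N)%N) (hbN : (b * st P = N * sv P)%N).

Let a : R := ratr (xu P) / (du P)%:R.
Let kappa : R := (ratr (xv P) - (dv P)%:R * a) / N%:R.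
Let vval (p : nat * nat) : R := a + kappa * (w p)%:R.
Let T : 'M[R]_(st P, dt P) := \matrix_(i, c) oapp vval a (occ (i : nat, c : nat)).
Let U : 'M[R]_(su P, du P) := \matrix_(i, j) a.
Let V : 'M[R]_(sv P, dv P) := \matrix_(j, r) vval (j : nat, r : nat).

Let xu_a : ratr (xu P) = (du P)%:R * a.
Proof.
by case: hP => [[_ hu _ _] _]; rewrite /a mulrC divfK // pnatr_eq0 -lt0n ltnW.
Qed.

Let xv_kappa : ratr (xv P) = (dv P)%:R * a + kappa * N%:R.
Proof. by rewrite /kappa divfK ?pnatr_eq0 -?lt0n // addrC subrK. Qed.

Lemma kappa_gt0 : 0 < kappa.
Proof.
case: hP => [[_ hu hv _] [_ _ _ _ hlt]].
rewrite divr_gt0 ?ltr0n // subr_gt0 mulrC -ltr_pdivlMr ?ltr0n //.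
by move: hlt; rewrite -(ltr_rat R) !fmorph_div !rmorph_nat.
Qed.

Let oapp_vval o : oapp vval a o = a + kappa * (oapp w 0%N o)%:R.
Proof. by case: o => [p|] //=; rewrite mulr0 addr0. Qed.

Lemma layout_sum_T i : \sum_c T i c = ratr (xt P).
Proof.
case: hP => [_ [st_gt0 _ hcnt hsum _]]; case: hL => _ _ _ rowT.
under eq_bigr => c _ do rewrite mxE oapp_vval.
rewrite sum_affine rowT //; apply: (mulfI (x := (st P)%:R)); first by rewrite pnatr_eq0 -lt0n.
have <- : (su P)%:R * ratr (xu P) + (sv P)%:R * ratr (xv P) = (st P)%:R * ratr (xt P) :> R.
  by have := congr1 (@ratr R) hsum; rewrite !rmorphD !rmorphM /= !rmorph_nat.
rewrite xu_a xv_kappa.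
have -> : (su P)%:R * ((du P)%:R * a) + (sv P)%:R * ((dv P)%:R * a + kappa * N%:R)
          = (su P * du P + sv P * dv P)%N%:R * a + kappa * (N * sv P)%N%:R :> R.
  by rewrite natrD !natrM; ring.
by rewrite hcnt -hbN !natrM; ring.
Qed.

Lemma layout_sum_U i : \sum_j U i j = ratr (xu P).
Proof. by under eq_bigr => j _ do rewrite mxE; rewrite sumr_const card_ord -mulr_natl xu_a. Qed.

Lemma layout_sum_V j : \sum_r V j r = ratr (xv P).
Proof.
case: hL => _ _ rowV _; under eq_bigr => r _ do rewrite mxE.
by rewrite sum_affine rowV // xv_kappa.
Qed.

Lemma layout_perm : perm_eq (entries T) (entries U ++ entries V).
Proof.
case: hP => [_ [_ _ hcnt _ _]]; case: hL => hplace _ _ _.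
rewrite /T /U /V (@entries_mx _ _ _ (fun x => oapp vval a (occ x))).
rewrite (@entries_mx _ _ _ (fun _ => a)) entries_mx.
have -> : [seq a | _ <- grid (su P) (du P)] = nseq (st P * dt P - sv P * dv P) a.
  rewrite -hcnt addnK -(size_grid (su P) (du P)) -(size_map (fun=> a)).
  by apply/all_pred1P; rewrite all_map; apply/allP => ? _ /=.
exact (perm_placement hplace vval a).
Qed.

Let vval_gt p : p \in grid (sv P) (dv P) -> a < vval p.
Proof.
by case: hL => _ w_gt0 _ _ /w_gt0 wp; rewrite ltrDl mulr_gt0 ?ltr0n // kappa_gt0.
Qed.

Lemma layout_solution : exists T U V,
  [/\ @feasible R P T U V, min_entry T = a & forall i j, a < V i j].
Proof.
have feas : feasible T U V.
  by split; [exact: layout_sum_T | exact: layout_sum_U | exact: layout_sum_V | exact: layout_perm].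
exists T, U, V; split => //.
- apply/le_anti; rewrite (feasible_min_entry_le hP feas) /=.
  case: hP => [[ht _ _ _] [st_gt0 _ _ _ _]].
  apply: le_min_entry => // [|i c]; first exact: leq_trans ht.
  by rewrite mxE oapp_vval lerDl mulr_ge0 // ltW // kappa_gt0.
- by move=> j r; rewrite mxE; apply: vval_gt; rewrite mem_grid /= !ltn_ord.
Qed.

End LayoutSolution.

Lemma dap_shape P : valid_dap P -> 0 < r_v P ->
  (exists B : int, (2 * (sv P)%:Z)%:~R / (r_v P)%:~R = B%:~R :> rat) ->
  exists m b, [/\ st P = (m * ((dv P).-1 * b).+1)%N, sv P = (m * b)%N
                & dv P = 1%N -> (b <= dt P)%N].
Proof.
move=> hP r_gt0 [B hB]; case: hP => [[_ _ v_gt0 hv1] [_ _ hcnt _ _]].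
have svB : 2 * (sv P)%:Z = B * r_v P.
  by apply: (@intr_inj rat); rewrite [RHS]intrM -hB divfK // intr_eq0 gt_eqF.
move: r_gt0 svB; rewrite /r_v.
case: (dv P) v_gt0 hv1 hcnt => // w _ hv1 hcnt r_gt0 svB.
have [m hst] : exists m, st P = (m + w * sv P)%N by exists (st P - w * sv P)%N; lia.
have m_gt0 : (0 < m)%N by lia.
have rv_m : (su P * du P)%:Z - ((dt P)%:Z - 2) * (st P)%:Z - (w.+1%:Z - 2) * (sv P)%:Z
            = 2 * m%:Z by lia.
rewrite rv_m in svB; case: B {hB} svB => b svB; last by nia.
have hsv : sv P = (m * b)%N by lia.
exists m, b; split => //.
  by rewrite mulnS mulnCA -hsv.
move=> /eqP; rewrite eqSS => /eqP w0; move: hv1 hst; rewrite w0 mul0n addn0 => /(_ erefl).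
rewrite mul1n hsv => + st_m; rewrite st_m [X in (_ <= X)%N]mulnC leq_pmul2l //.
by move/leq_trans; apply; exact: leq_subr.
Qed.

Theorem theorem5 (R : realType) (P : dap) :
  valid_dap P ->
  0 < r_v P ->
  (exists b : int, (2 * (sv P)%:Z)%:~R / (r_v P)%:~R = b%:~R :> rat) ->
  is_fP P (ratr (xu P) / (du P)%:R : R) /\
  exists (T : 'M[R]_(st P, dt P)) (U : 'M[R]_(su P, du P)) (V : 'M[R]_(sv P, dv P)),
    [/\ feasible T U V, min_entry T = ratr (xu P) / (du P)%:R
      & forall i j, ratr (xu P) / (du P)%:R < V i j].
Proof.
move=> hP r_gt0 hb; have [m [b [hst hsv hbt]]] := dap_shape hP r_gt0 hb.
have [[t_gt1 _ v_gt0 _] _] := hP.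
have [occ [site [w hL]]] := layout_block t_gt1 v_gt0 hbt.
have := layout_repeat m hL; rewrite -hst -hsv => hLP.
have hbN : (b * st P = ((dv P).-1 * b).+1 * sv P)%N by rewrite hst hsv; ring.
have [T [U [V opt]]] := layout_solution R hP hLP (ltn0Sn _) hbN.
split; last by exists T, U, V.
split; first by case: opt => feas minT _; exists T, U, V.
by move=> T' U' V'; exact: feasible_min_entry_le.
Qed.
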